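(* Consider the upper half-space model $\mathbb{H}^3=\{(x_1,x_2,x_3)\in\mathbb{R}^3: x_3>0\}$ with metric $g=\frac{1}{x_3^2}(dx_1^2+dx_2^2+dx_3^2)$. Let $E$ be a complete end of revolution in $\mathbb{H}^3$ about the $x_3$-axis, and suppose there is $c>0$ such that $E$ is contained on (i.e. in the closed region above) the $c$-cone, namely $E\subset\{x\in\mathbb{H}^3: x_3\ge c\sqrt{x_1^2+x_2^2}\}$. Then $E$ is parabolic.
   Context: The $c$-cone ($c>0$) is the surface obtained by rotating the curve $t\mapsto(t,0,ct)$, $t>0$, about the $x_3$-axis; it divides $\mathbb{H}^3$ into a part on (above) it and a part below it. A complete end of revolution about the $x_3$-axis is the set $E=\{(\gamma_1(s)\cos\theta,\gamma_1(s)\sin\theta,\gamma_2(s)): s\ge0,\ \theta\in[0,2\pi)\}$, where $\gamma(s)=(\gamma_1(s),0,\gamma_2(s))$, $s\in[0,\infty)$, is a smooth regular curve in the totally geodesic half-plane $\{x_2=0,x_1>0\}$ (so $\gamma_1>0$, $\gamma_2>0$) of infinite hyperbolic length; $E$ carries the metric induced by this immersion of $[0,\infty)\times\mathbb{S}^1$. An end $E$ is parabolic if every bounded harmonic function on $E$ is determined by its boundary values. *)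

From Stdlib Require Import Reals.
From Coquelicot Require Import Coquelicot.
Open Scope R_scope.

Definition smooth (f : R -> R) : Prop := forall (n : nat) (x : R), ex_derive_n f n x.

Definition dS (f : R -> R -> R) (s t : R) : R := Derive (fun x => f x t) s.
Definition dT (f : R -> R -> R) (s t : R) : R := Derive (fun y => f s y) t.

(** The immersion X(s,theta) = (g1 s cos theta, g1 s sin theta, g2 s) of
    [0,oo) x S^1 into the upper half-space H^3. *)
Definition X1 (g1 : R -> R) (s t : R) : R := g1 s * cos t.
Definition X2 (g1 : R -> R) (s t : R) : R := g1 s * sin t.
Definition X3 (g2 : R -> R) (s t : R) : R := g2 s.

(** Coefficients E, F, G of the metric induced by g = |dx|^2 / x3^2. *)
Definition metE (g1 g2 : R -> R) (s t : R) : R :=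
  ((dS (X1 g1) s t)^2 + (dS (X2 g1) s t)^2 + (dS (X3 g2) s t)^2) / (X3 g2 s t)^2.
Definition metF (g1 g2 : R -> R) (s t : R) : R :=
  (dS (X1 g1) s t * dT (X1 g1) s t + dS (X2 g1) s t * dT (X2 g1) s t
   + dS (X3 g2) s t * dT (X3 g2) s t) / (X3 g2 s t)^2.
Definition metG (g1 g2 : R -> R) (s t : R) : R :=
  ((dT (X1 g1) s t)^2 + (dT (X2 g1) s t)^2 + (dT (X3 g2) s t)^2) / (X3 g2 s t)^2.
Definition metDet (g1 g2 : R -> R) (s t : R) : R :=
  metE g1 g2 s t * metG g1 g2 s t - (metF g1 g2 s t)^2.

Definition laplaceE (g1 g2 : R -> R) (u : R -> R -> R) (s t : R) : R :=
  / sqrt (metDet g1 g2 s t) *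
  ( dS (fun a b => (metG g1 g2 a b * dS u a b - metF g1 g2 a b * dT u a b)
                   / sqrt (metDet g1 g2 a b)) s t
  + dT (fun a b => (metE g1 g2 a b * dT u a b - metF g1 g2 a b * dS u a b)
                   / sqrt (metDet g1 g2 a b)) s t ).

Definition C2_interior (u : R -> R -> R) : Prop :=
  forall s t, 0 < s ->
    ex_derive (fun x => u x t) s /\ ex_derive (fun y => u s y) t /\
    ex_derive (fun x => dS u x t) s /\ ex_derive (fun y => dS u s y) t /\
    ex_derive (fun x => dT u x t) s /\ ex_derive (fun y => dT u s y) t /\
    continuity_2d_pt u s t /\ continuity_2d_pt (dS u) s t /\
    continuity_2d_pt (dT u) s t /\ continuity_2d_pt (dS (dS u)) s t /\
    continuity_2d_pt (dT (dS u)) s t /\ continuity_2d_pt (dS (dT u)) s t /\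
    continuity_2d_pt (dT (dT u)) s t.

Definition continuous_on_end (u : R -> R -> R) : Prop :=
  forall s t eps, 0 <= s -> 0 < eps -> exists delta, 0 < delta /\
    forall s' t', 0 <= s' -> Rabs (s' - s) < delta -> Rabs (t' - t) < delta ->
      Rabs (u s' t' - u s t) < eps.

(** A function on the end E, i.e. on [0,oo) x S^1 (2pi-periodic in theta),
    continuous up to the boundary and harmonic in the interior for the
    induced metric. *)
Definition harmonic_on_end (g1 g2 : R -> R) (u : R -> R -> R) : Prop :=
  (forall s t, 0 <= s -> u s (t + 2 * PI) = u s t) /\
  continuous_on_end u /\ C2_interior u /\
  (forall s t, 0 < s -> laplaceE g1 g2 u s t = 0).

Definition bounded_on_end (u : R -> R -> R) : Prop :=
  exists M, forall s t, 0 <= s -> Rabs (u s t) <= M.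

(** Parabolicity: every bounded harmonic function on E is determined by its
    boundary values on the boundary circle s = 0. *)
Definition parabolic_end (g1 g2 : R -> R) : Prop :=
  forall u v : R -> R -> R,
    harmonic_on_end g1 g2 u -> bounded_on_end u ->
    harmonic_on_end g1 g2 v -> bounded_on_end v ->
    (forall t, u 0 t = v 0 t) ->
    forall s t, 0 <= s -> u s t = v s t.

(** Hypotheses on the generating curve gamma = (g1, 0, g2), s in [0,oo). *)
Definition complete_end_curve (g1 g2 : R -> R) : Prop :=
  smooth g1 /\ smooth g2 /\
  (forall s, 0 <= s -> 0 < g1 s /\ 0 < g2 s) /\
  (forall s, 0 <= s -> Derive g1 s <> 0 \/ Derive g2 s <> 0) /\
  (* infinite hyperbolic length *)
  (forall M, exists T, 0 <= T /\
     M < RInt (fun s => sqrt ((Derive g1 s)^2 + (Derive g2 s)^2) / g2 s) 0 T).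

(* In the coordinate [phi s = int_0^s |gamma'| / gamma_1] the induced metric is conformal to the
   flat cylinder [dphi^2 + dtheta^2], and the Laplacian becomes
   [(d_s (k d_s) + h d_theta^2) / sqrt det] with [h = |gamma'| / gamma_1 = 1 / k].  On the [c]-cone
   [gamma_2 >= c gamma_1], so [phi] dominates [c] times the hyperbolic arc length and is unbounded.
   If [u - v > 0] somewhere while [u <= v] on the boundary circle, add the barrier
   [-eps phi + del phi^2] (with [del phi <= eps / 2] up to a radius [R] where [phi] is large):
   the sum is [<= 0] at [s = 0], negative at [s = R] and positive somewhere, so its maximum over
   the compact annulus is interior, where the second-derivative test contradicts harmonicity. *)

From Stdlib Require Import Reals Lra Lia Psatz ZArith Classical ClassicalEpsilon.
From Coquelicot Require Import Coquelicot.
Open Scope R_scope.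

Definition continuous_on_interval (f : R -> R) (a b : R) : Prop :=
  forall x, a <= x <= b -> forall eps, 0 < eps -> exists del, 0 < del /\
    forall y, a <= y <= b -> Rabs (y - x) < del -> Rabs (f y - f x) < eps.

Definition continuous_on_box (W : R -> R -> R) (a b c d : R) : Prop :=
  forall s t, a <= s <= b -> c <= t <= d -> forall eps, 0 < eps -> exists del, 0 < del /\
    forall s' t', a <= s' <= b -> c <= t' <= d -> Rabs (s' - s) < del -> Rabs (t' - t) < del ->
      Rabs (W s' t' - W s t) < eps.

Definition clamp (a b x : R) : R := Rmax a (Rmin b x).

Lemma clamp_in a b x : a <= b -> a <= clamp a b x <= b.
Proof. intros; unfold clamp, Rmax, Rmin; repeat destruct Rle_dec; lra. Qed.

Lemma clamp_id a b x : a <= x <= b -> clamp a b x = x.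
Proof. intros; unfold clamp, Rmax, Rmin; repeat destruct Rle_dec; lra. Qed.

Lemma clamp_lipschitz a b x y : a <= b -> Rabs (clamp a b x - clamp a b y) <= Rabs (x - y).
Proof. intros; unfold clamp, Rmax, Rmin; repeat destruct Rle_dec; split_Rabs; lra. Qed.

Lemma interval_max (f : R -> R) a b : a <= b -> continuous_on_interval f a b ->
  exists x0, a <= x0 <= b /\ forall x, a <= x <= b -> f x <= f x0.
Proof.
  intros Hab Hf.
  destruct (continuity_ab_maj (fun x => f (clamp a b x)) a b Hab) as [x0 [Hmax Hx0]].
  - intros x _ eps Heps.
    destruct (Hf (clamp a b x) (clamp_in a b x Hab) eps Heps) as [del [Hdel Hclose]].
    exists del; split; [exact Hdel|]. intros y [_ Hy]. apply Hclose; [apply clamp_in; lra|].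
    eapply Rle_lt_trans; [apply clamp_lipschitz; lra | exact Hy].
  - exists x0; split; [exact Hx0|]. intros x Hx.
    specialize (Hmax x Hx). rewrite !clamp_id in Hmax; auto.
Qed.

Lemma box_uniform_continuity W a b c d : continuous_on_box W a b c d ->
  forall eps, 0 < eps -> exists del, 0 < del /\ forall x x' y,
    a <= x <= b -> a <= x' <= b -> c <= y <= d -> Rabs (x - x') < del ->
    Rabs (W x y - W x' y) < eps.
Proof.
  intros HW eps Heps.
  set (P := fun u v del => 0 < del /\ (a <= u <= b -> c <= v <= d ->
    forall s' t', a <= s' <= b -> c <= t' <= d -> Rabs (s' - u) < del -> Rabs (t' - v) < del ->
      Rabs (W s' t' - W u v) < eps / 2)).
  assert (HP : forall u v, exists del, P u v del).
  { intros u v. destruct (classic (a <= u <= b /\ c <= v <= d)) as [[Hu Hv]|Hout].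
    - destruct (HW u v Hu Hv (eps / 2)) as [del [Hdel H]]; [lra|]. exists del; split; auto.
    - exists 1; split; [lra|]. intros Hu Hv. tauto. }
  set (D := fun u v => epsilon (inhabits 0) (P u v)).
  assert (HD : forall u v, P u v (D u v)) by (intros u v; apply epsilon_spec, HP).
  assert (Hpos : forall u v, 0 < D u v / 2) by (intros u v; destruct (HD u v); lra).
  destruct (compactness_value_2d a b c d (fun u v => mkposreal _ (Hpos u v))) as [del Hcover].
  exists del; split; [apply cond_pos|]. intros x x' y Hx Hx' Hy Hxx'.
  specialize (Hcover x y Hx Hy). apply NNPP in Hcover.
  destruct Hcover as [u [v [Hu [Hv [Hxu [Hyv Hdu]]]]]]; simpl in *.
  destruct (HD u v) as [_ Huv]. pose proof (Hpos u v).
  assert (A : Rabs (W x y - W u v) < eps / 2) by (apply Huv; auto; lra).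
  assert (A' : Rabs (W x' y - W u v) < eps / 2).
  { apply Huv; auto; [|lra]. apply Rabs_def2 in Hxx'. apply Rabs_def2 in Hxu. apply Rabs_def1; lra. }
  apply Rabs_def2 in A. apply Rabs_def2 in A'. apply Rabs_def1; lra.
Qed.

Lemma box_max W a b c d : a <= b -> c <= d -> continuous_on_box W a b c d ->
  exists s0 t0, a <= s0 <= b /\ c <= t0 <= d /\
    forall s t, a <= s <= b -> c <= t <= d -> W s t <= W s0 t0.
Proof.
  intros Hab Hcd HW.
  (* Maximize in [t] for each [s]; the row maximum is continuous by uniform continuity. *)
  assert (Hrow : forall s, exists t0, a <= s <= b ->
    c <= t0 <= d /\ forall t, c <= t <= d -> W s t <= W s t0).
  { intros s. destruct (classic (a <= s <= b)) as [Hs|Hs]; [|exists 0; tauto].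
    destruct (interval_max (W s) c d Hcd) as [t0 Ht0]; [|exists t0; auto].
    intros t Ht eps Heps. destruct (HW s t Hs Ht eps Heps) as [del [Hdel H]].
    exists del; split; auto. intros t' Ht' Htt. apply H; auto. rewrite Rminus_diag, Rabs_R0; auto. }
  set (T := fun s => epsilon (inhabits 0) (fun t0 => a <= s <= b ->
    c <= t0 <= d /\ forall t, c <= t <= d -> W s t <= W s t0)).
  assert (HT : forall s, a <= s <= b -> c <= T s <= d /\ forall t, c <= t <= d -> W s t <= W s (T s))
    by (intros s; apply (epsilon_spec (inhabits 0) _ (Hrow s))).
  destruct (interval_max (fun s => W s (T s)) a b Hab) as [s0 [Hs0 Hmax]].
  - intros s Hs eps Heps.
    destruct (box_uniform_continuity W a b c d HW eps Heps) as [del [Hdel Hunif]].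
    exists del; split; auto. intros s' Hs' Hss'.
    destruct (HT s Hs) as [HTs Hs_max]. destruct (HT s' Hs') as [HTs' Hs'_max].
    specialize (Hs_max _ HTs'). specialize (Hs'_max _ HTs).
    pose proof (Hunif s' s (T s') Hs' Hs HTs' Hss') as C1.
    pose proof (Hunif s' s (T s) Hs' Hs HTs Hss') as C2.
    apply Rabs_def2 in C1. apply Rabs_def2 in C2. apply Rabs_def1; lra.
  - exists s0, (T s0). destruct (HT s0 Hs0) as [HT0 _]. repeat split; try lra.
    intros s t Hs Ht. apply Rle_trans with (W s (T s)); [apply (HT s Hs); auto | auto].
Qed.

Lemma periodic_shift_nat (f : R -> R) p : (forall t, f (t + p) = f t) ->
  forall (n : nat) t, f (t + INR n * p) = f t.
Proof.
  intros Hp n. induction n as [|n IH]; intros t.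
  - rewrite Rmult_0_l, Rplus_0_r; reflexivity.
  - rewrite <- (IH t), <- (Hp (t + INR n * p)), S_INR. f_equal; ring.
Qed.

Lemma periodic_representative (f : R -> R) p : 0 < p -> (forall t, f (t + p) = f t) ->
  forall t, exists t', 0 <= t' <= p /\ f t = f t'.
Proof.
  intros Hp Hper t.
  set (n := Int_part (t / p)).
  destruct (base_Int_part (t / p)) as [Hlo Hhi]. fold n in Hlo, Hhi.
  assert (Hq : IZR n * p <= t < IZR n * p + p).
  { split.
    - apply Rmult_le_compat_r with (r := p) in Hlo; [|lra].
      unfold Rdiv in Hlo. rewrite Rmult_assoc, Rinv_l, Rmult_1_r in Hlo; lra.
    - assert (t / p < IZR n + 1) by lra.
      apply Rmult_lt_compat_r with (r := p) in H; [|lra].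
      unfold Rdiv in H. rewrite Rmult_assoc, Rinv_l, Rmult_1_r in H; lra. }
  exists (t - IZR n * p); split; [lra|].
  destruct (Z_le_gt_dec 0 n) as [Hn|Hn].
  - rewrite <- (periodic_shift_nat f p Hper (Z.to_nat n) (t - IZR n * p)).
    rewrite INR_IZR_INZ, Z2Nat.id by exact Hn. f_equal; ring.
  - rewrite <- (periodic_shift_nat f p Hper (Z.to_nat (- n)) t).
    rewrite INR_IZR_INZ, Z2Nat.id by lia. rewrite opp_IZR. f_equal; ring.
Qed.

Lemma is_derive_pos_crossing (P : R -> R) (x0 l : R) : is_derive P x0 l -> 0 < l ->
  exists del, 0 < del /\ forall y, y <> x0 -> Rabs (y - x0) < del -> 0 < (P y - P x0) * (y - x0).
Proof.
  intros HP Hl. apply is_derive_Reals in HP.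
  destruct (HP (l / 2)) as [del Hdel]; [lra|].
  exists del; split; [apply cond_pos|]. intros y Hy Hyx.
  assert (Hq := Hdel (y - x0) ltac:(lra) Hyx).
  replace (x0 + (y - x0)) with y in Hq by ring. apply Rabs_def2 in Hq.
  replace ((P y - P x0) * (y - x0)) with ((P y - P x0) / (y - x0) * (y - x0) ^ 2) by (field; lra).
  apply Rmult_lt_0_compat; [lra | apply pow2_gt_0; lra].
Qed.

(* Differentiating only the factor [P] of [f' = k P], and only at [x0], suits the divergence
   form [d_s (k d_s u)] of the Laplacian below. *)
Lemma local_max_derive_factor_nonpos (f P k : R -> R) (x0 r l : R) : 0 < r ->
  (forall y, Rabs (y - x0) < r -> f y <= f x0) ->
  (forall y, Rabs (y - x0) < r -> is_derive f y (k y * P y)) ->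
  (forall y, Rabs (y - x0) < r -> 0 < k y) ->
  is_derive P x0 l -> l <= 0.
Proof.
  intros Hr Hmax Hf Hk HP.
  destruct (Rle_or_lt l 0) as [|Hl]; [assumption|exfalso].
  destruct (is_derive_pos_crossing P x0 l HP Hl) as [del [Hdel Hcross]].
  set (h := Rmin del r / 2).
  assert (Hh : 0 < h /\ h < del /\ h < r) by (unfold h, Rmin; destruct Rle_dec; lra).
  assert (Hf' : forall z, Rabs (z - x0) < r -> derivable_pt_lim f z (k z * P z))
    by (intros z Hz; apply is_derive_Reals, Hf, Hz).
  destruct (Rle_or_lt 0 (P x0)) as [HP0|HP0].
  - destruct (MVT_cor2 f (fun z => k z * P z) x0 (x0 + h)) as [c [Hmvt Hc]]; [lra| |].
    { intros z Hz. apply Hf'. split_Rabs; lra. }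
    assert (0 < k c) by (apply Hk; split_Rabs; lra).
    assert (0 < (P c - P x0) * (c - x0)) by (apply Hcross; [lra | split_Rabs; lra]).
    assert (f (x0 + h) <= f x0) by (apply Hmax; split_Rabs; lra).
    assert (0 < P c) by nra.
    assert (0 < k c * P c * (x0 + h - x0)) by (repeat apply Rmult_lt_0_compat; lra).
    lra.
  - destruct (MVT_cor2 f (fun z => k z * P z) (x0 - h) x0) as [c [Hmvt Hc]]; [lra| |].
    { intros z Hz. apply Hf'. split_Rabs; lra. }
    assert (0 < k c) by (apply Hk; split_Rabs; lra).
    assert (0 < (P c - P x0) * (c - x0)) by (apply Hcross; [lra | split_Rabs; lra]).
    assert (f (x0 - h) <= f x0) by (apply Hmax; split_Rabs; lra).
    assert (P c < 0) by nra.
    assert (0 < k c * - P c * (x0 - (x0 - h))) by (repeat apply Rmult_lt_0_compat; lra).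
    lra.
Qed.

Definition speed2 (g1 g2 : R -> R) (s : R) : R := Derive g1 s ^ 2 + Derive g2 s ^ 2.

Definition lap_coef_s (g1 g2 : R -> R) (s : R) : R := g1 s / sqrt (speed2 g1 g2 s).
Definition lap_coef_t (g1 g2 : R -> R) (s : R) : R := sqrt (speed2 g1 g2 s) / g1 s.

Record regular_profile (g1 g2 : R -> R) : Prop := {
  profile_derive1 : forall x, ex_derive g1 x;
  profile_derive1' : forall x, ex_derive (Derive g1) x;
  profile_derive2 : forall x, ex_derive g2 x;
  profile_derive2' : forall x, ex_derive (Derive g2) x;
  profile_pos1 : forall s, 0 <= s -> 0 < g1 s;
  profile_pos2 : forall s, 0 <= s -> 0 < g2 s;
  profile_speed_pos : forall s, 0 <= s -> 0 < speed2 g1 g2 s }.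

Lemma regular_profile_of_complete g1 g2 : complete_end_curve g1 g2 -> regular_profile g1 g2.
Proof.
  intros [S1 [S2 [Hpos [Hreg _]]]]. split.
  - exact (S1 1%nat).
  - exact (S1 2%nat).
  - exact (S2 1%nat).
  - exact (S2 2%nat).
  - intros s Hs. apply Hpos, Hs.
  - intros s Hs. apply Hpos, Hs.
  - intros s Hs. unfold speed2.
    destruct (Hreg s Hs) as [H|H]; apply pow2_gt_0 in H; pose proof (pow2_ge_0 (Derive g1 s));
      pose proof (pow2_ge_0 (Derive g2 s)); lra.
Qed.

Lemma dS_X1 g1 s t : dS (X1 g1) s t = Derive g1 s * cos t.
Proof. apply Derive_scal_l. Qed.

Lemma dS_X2 g1 s t : dS (X2 g1) s t = Derive g1 s * sin t.
Proof. apply Derive_scal_l. Qed.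

Lemma dS_X3 g2 s t : dS (X3 g2) s t = Derive g2 s.
Proof. reflexivity. Qed.

Lemma dT_X1 g1 s t : dT (X1 g1) s t = - (g1 s * sin t).
Proof. unfold dT, X1. rewrite Derive_scal, (is_derive_unique _ _ _ (is_derive_cos t)). ring. Qed.

Lemma dT_X2 g1 s t : dT (X2 g1) s t = g1 s * cos t.
Proof. unfold dT, X2. rewrite Derive_scal, (is_derive_unique _ _ _ (is_derive_sin t)). reflexivity. Qed.

Lemma dT_X3 g2 s t : dT (X3 g2) s t = 0.
Proof. unfold dT, X3. apply Derive_const. Qed.

Lemma sin_cos_sq t : sin t ^ 2 + cos t ^ 2 = 1.
Proof. rewrite <- (sin2_cos2 t). unfold Rsqr. ring. Qed.

Lemma metric_rev g1 g2 s t : 0 < g1 s -> 0 < g2 s -> 0 < speed2 g1 g2 s ->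
  metE g1 g2 s t = speed2 g1 g2 s / g2 s ^ 2 /\ metF g1 g2 s t = 0 /\
  metG g1 g2 s t = g1 s ^ 2 / g2 s ^ 2 /\
  sqrt (metDet g1 g2 s t) = sqrt (speed2 g1 g2 s) * g1 s / g2 s ^ 2.
Proof.
  intros H1 H2 HS. pose proof (sin_cos_sq t) as Hsc.
  assert (HE : metE g1 g2 s t = speed2 g1 g2 s / g2 s ^ 2).
  { unfold metE. rewrite dS_X1, dS_X2, dS_X3. unfold X3, speed2, Rdiv. f_equal.
    transitivity (Derive g1 s ^ 2 * (sin t ^ 2 + cos t ^ 2) + Derive g2 s ^ 2); [ring | rewrite Hsc; ring]. }
  assert (HF : metF g1 g2 s t = 0).
  { unfold metF. rewrite dS_X1, dS_X2, dT_X1, dT_X2, dT_X3. unfold X3. field. lra. }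
  assert (HG : metG g1 g2 s t = g1 s ^ 2 / g2 s ^ 2).
  { unfold metG. rewrite dT_X1, dT_X2, dT_X3. unfold X3, Rdiv. f_equal.
    transitivity (g1 s ^ 2 * (sin t ^ 2 + cos t ^ 2)); [ring | rewrite Hsc; ring]. }
  repeat split; auto.
  pose proof (sqrt_lt_R0 _ HS) as Hsq.
  unfold metDet. rewrite HE, HF, HG.
  rewrite <- (sqrt_pow2 (sqrt (speed2 g1 g2 s) * g1 s / g2 s ^ 2)).
  - f_equal. unfold Rdiv. rewrite !Rpow_mult_distr, pow2_sqrt by lra. field. lra.
  - apply Rlt_le, Rdiv_lt_0_compat; [apply Rmult_lt_0_compat|]; nra.
Qed.

Section RevolutionLaplacian.

Variables g1 g2 : R -> R.
Hypothesis Hreg : regular_profile g1 g2.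

Lemma lap_coef_ex_derive s : 0 <= s ->
  ex_derive (lap_coef_t g1 g2) s /\ ex_derive (lap_coef_s g1 g2) s.
Proof.
  intros Hs. pose proof (profile_pos1 _ _ Hreg s Hs). pose proof (profile_speed_pos _ _ Hreg s Hs).
  pose proof (profile_derive1 _ _ Hreg s). pose proof (profile_derive1' _ _ Hreg s).
  pose proof (profile_derive2' _ _ Hreg s).
  unfold lap_coef_t, lap_coef_s, speed2 in *.
  split; auto_derive; repeat split; auto; try lra. apply Rgt_not_eq, sqrt_lt_R0; lra.
Qed.

Lemma lap_coef_t_pos s : 0 <= s -> 0 < lap_coef_t g1 g2 s.
Proof.
  intros Hs. apply Rdiv_lt_0_compat.
  - apply sqrt_lt_R0, (profile_speed_pos _ _ Hreg s Hs).
  - apply (profile_pos1 _ _ Hreg s Hs).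
Qed.

Lemma lap_coef_t_mul_s s : 0 <= s -> lap_coef_t g1 g2 s * lap_coef_s g1 g2 s = 1.
Proof.
  intros Hs. pose proof (sqrt_lt_R0 _ (profile_speed_pos _ _ Hreg s Hs)).
  pose proof (profile_pos1 _ _ Hreg s Hs). unfold lap_coef_t, lap_coef_s. field. lra.
Qed.

Lemma sqrt_metDet_pos s t : 0 <= s -> 0 < sqrt (metDet g1 g2 s t).
Proof.
  intros Hs. pose proof (profile_pos1 _ _ Hreg s Hs). pose proof (profile_pos2 _ _ Hreg s Hs).
  pose proof (profile_speed_pos _ _ Hreg s Hs).
  destruct (metric_rev g1 g2 s t) as [_ [_ [_ ->]]]; auto.
  pose proof (sqrt_lt_R0 _ H1).
  apply Rdiv_lt_0_compat; [apply Rmult_lt_0_compat|]; nra.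
Qed.

Lemma flux_s_rev (u : R -> R -> R) s t : 0 <= s ->
  (metG g1 g2 s t * dS u s t - metF g1 g2 s t * dT u s t) / sqrt (metDet g1 g2 s t)
  = dS u s t * lap_coef_s g1 g2 s.
Proof.
  intros Hs. pose proof (profile_pos1 _ _ Hreg s Hs). pose proof (profile_pos2 _ _ Hreg s Hs).
  pose proof (profile_speed_pos _ _ Hreg s Hs). pose proof (sqrt_lt_R0 _ H1).
  destruct (metric_rev g1 g2 s t) as [_ [-> [-> ->]]]; auto.
  unfold lap_coef_s. field. nra.
Qed.

Lemma flux_t_rev (u : R -> R -> R) s t : 0 <= s ->
  (metE g1 g2 s t * dT u s t - metF g1 g2 s t * dS u s t) / sqrt (metDet g1 g2 s t)
  = dT u s t * lap_coef_t g1 g2 s.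
Proof.
  intros Hs. pose proof (profile_pos1 _ _ Hreg s Hs). pose proof (profile_pos2 _ _ Hreg s Hs).
  pose proof (profile_speed_pos _ _ Hreg s Hs). pose proof (sqrt_lt_R0 _ H1).
  destruct (metric_rev g1 g2 s t) as [-> [-> [_ ->]]]; auto.
  unfold lap_coef_t. rewrite <- (pow2_sqrt (speed2 g1 g2 s)) at 1 by lra. field. nra.
Qed.

Lemma laplaceE_rev (u : R -> R -> R) s t : 0 < s ->
  laplaceE g1 g2 u s t = / sqrt (metDet g1 g2 s t) *
    (Derive (fun a => dS u a t * lap_coef_s g1 g2 a) s + Derive (dT u s) t * lap_coef_t g1 g2 s).
Proof.
  intros Hs. unfold laplaceE. do 2 f_equal.
  - apply Derive_ext_loc. exists (mkposreal s Hs). intros a Ha.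
    apply flux_s_rev. apply (Rabs_def2 (a - s)) in Ha. simpl in Ha. lra.
  - unfold dT at 1. rewrite <- Derive_scal_l. apply Derive_ext. intros b. apply flux_t_rev. lra.
Qed.

Lemma harmonic_rev (u : R -> R -> R) s t : 0 < s -> laplaceE g1 g2 u s t = 0 ->
  Derive (fun a => dS u a t * lap_coef_s g1 g2 a) s + Derive (dT u s) t * lap_coef_t g1 g2 s = 0.
Proof.
  intros Hs Hu. rewrite laplaceE_rev in Hu by exact Hs.
  apply Rmult_integral in Hu as [Hu|Hu]; [exfalso|exact Hu].
  apply (Rinv_neq_0_compat _ (Rgt_not_eq _ _ (sqrt_metDet_pos s t ltac:(lra)))), Hu.
Qed.

End RevolutionLaplacian.
Definition conformal_coord (g1 g2 : R -> R) (s : R) : R := RInt (lap_coef_t g1 g2) 0 s.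

Section ConformalCoordinate.

Variables g1 g2 : R -> R.
Hypothesis Hreg : regular_profile g1 g2.

Local Notation phi := (conformal_coord g1 g2).

Lemma lap_coef_t_ex_RInt a b : 0 <= a -> 0 <= b -> ex_RInt (lap_coef_t g1 g2) a b.
Proof.
  intros Ha Hb. apply (@ex_RInt_continuous R_CompleteNormedModule). intros z Hz.
  apply (@ex_derive_continuous R_AbsRing R_NormedModule), (lap_coef_ex_derive g1 g2 Hreg).
  unfold Rmin in Hz; destruct Rle_dec; lra.
Qed.

Lemma conformal_coord_0 : phi 0 = 0.
Proof. unfold conformal_coord. rewrite RInt_point. reflexivity. Qed.

Lemma conformal_coord_sub a b : 0 <= a -> 0 <= b -> phi b - phi a = RInt (lap_coef_t g1 g2) a b.
Proof.
  intros Ha Hb. unfold conformal_coord.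
  rewrite <- (RInt_Chasles (lap_coef_t g1 g2) 0 a b); try apply lap_coef_t_ex_RInt; try lra.
  unfold plus; simpl; ring.
Qed.

Lemma conformal_coord_le a b : 0 <= a <= b -> phi a <= phi b.
Proof.
  intros Hab. cut (0 <= phi b - phi a); [lra|].
  rewrite conformal_coord_sub by lra. apply RInt_ge_0; [lra | apply lap_coef_t_ex_RInt; lra |].
  intros x Hx. apply Rlt_le, (lap_coef_t_pos g1 g2 Hreg). lra.
Qed.

Lemma conformal_coord_nonneg s : 0 <= s -> 0 <= phi s.
Proof. intros Hs. rewrite <- conformal_coord_0. apply conformal_coord_le. lra. Qed.

Lemma conformal_coord_derive s : 0 < s -> is_derive phi s (lap_coef_t g1 g2 s).
Proof.
  intros Hs. apply (is_derive_RInt _ phi 0).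
  - exists (mkposreal s Hs). intros y Hy. apply (@RInt_correct R_CompleteNormedModule).
    apply (Rabs_def2 (y - s)) in Hy. simpl in Hy. apply lap_coef_t_ex_RInt; lra.
  - apply (@ex_derive_continuous R_AbsRing R_NormedModule), (lap_coef_ex_derive g1 g2 Hreg). lra.
Qed.

Lemma conformal_coord_lipschitz R0 : 0 <= R0 -> exists H, 0 <= H /\
  forall x y, 0 <= x <= R0 -> 0 <= y <= R0 -> Rabs (phi x - phi y) <= H * Rabs (x - y).
Proof.
  intros HR.
  destruct (continuity_ab_maj (lap_coef_t g1 g2) 0 R0 HR) as [m [Hm Hm0]].
  { intros z Hz. apply derivable_continuous_pt, ex_derive_Reals_0, (lap_coef_ex_derive g1 g2 Hreg). lra. }
  exists (lap_coef_t g1 g2 m); split; [apply Rlt_le, (lap_coef_t_pos g1 g2 Hreg); lra|].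
  assert (Hle : forall x y, 0 <= x <= R0 -> 0 <= y <= R0 -> x <= y ->
    Rabs (phi x - phi y) <= lap_coef_t g1 g2 m * Rabs (x - y)).
  { intros x y Hx Hy Hxy.
    rewrite Rabs_minus_sym, conformal_coord_sub, (Rabs_minus_sym x), (Rabs_pos_eq (y - x)), Rmult_comm
      by lra.
    apply abs_RInt_le_const; [lra | apply lap_coef_t_ex_RInt; lra |].
    intros z Hz. rewrite Rabs_pos_eq; [apply Hm; lra|]. apply Rlt_le, (lap_coef_t_pos g1 g2 Hreg); lra. }
  intros x y Hx Hy. destruct (Rle_or_lt x y); [apply Hle; auto|].
  rewrite Rabs_minus_sym, (Rabs_minus_sym x). apply Hle; auto; lra.
Qed.

(* On the [c]-cone, the hyperbolic arc length [|gamma'| / g2] is at most [lap_coef_t / c]. *)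
Lemma conformal_coord_unbounded c : 0 < c -> (forall s, 0 <= s -> c * g1 s <= g2 s) ->
  (forall M, exists T, 0 <= T /\ M < RInt (fun s => sqrt (speed2 g1 g2 s) / g2 s) 0 T) ->
  forall M, exists T, 0 <= T /\ M < phi T.
Proof.
  intros Hc Hcone Hlen M.
  destruct (Hlen (M / c)) as [T [HT HMT]]. exists T; split; [exact HT|].
  set (len := fun s => sqrt (speed2 g1 g2 s) / g2 s) in HMT.
  assert (Hlen_int : ex_RInt len 0 T).
  { apply (@ex_RInt_continuous R_CompleteNormedModule). intros z Hz.
    assert (0 <= z) by (unfold Rmin in Hz; destruct Rle_dec; lra).
    pose proof (profile_speed_pos _ _ Hreg z H). pose proof (profile_pos2 _ _ Hreg z H).
    pose proof (profile_derive1' _ _ Hreg z). pose proof (profile_derive2 _ _ Hreg z).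
    pose proof (profile_derive2' _ _ Hreg z).
    apply (@ex_derive_continuous R_AbsRing R_NormedModule). unfold len, speed2 in *.
    auto_derive. repeat split; auto; lra. }
  assert (Hcmp : RInt (fun s => c * len s) 0 T <= phi T).
  { apply RInt_le; [exact HT | exact (ex_RInt_scal (V := R_CompleteNormedModule) len 0 T c Hlen_int) | apply lap_coef_t_ex_RInt; lra |].
    intros x Hx. pose proof (Hcone x ltac:(lra)). pose proof (profile_pos1 _ _ Hreg x ltac:(lra)).
    pose proof (profile_pos2 _ _ Hreg x ltac:(lra)).
    pose proof (sqrt_pos (speed2 g1 g2 x)).
    unfold len, lap_coef_t. apply Rmult_le_reg_r with (g1 x * g2 x); [nra|].
    field_simplify; nra. }
  assert (Hscal : RInt (fun s => c * len s) 0 T = c * RInt len 0 T)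
    by exact (RInt_scal (V := R_CompleteNormedModule) len 0 T c Hlen_int).
  apply Rmult_lt_compat_l with (r := c) in HMT; [|exact Hc].
  replace (c * (M / c)) with M in HMT by (field; lra). lra.
Qed.

End ConformalCoordinate.
Lemma continuous_on_interval_of_lipschitz (f : R -> R) a b H :
  (forall x y, a <= x <= b -> a <= y <= b -> Rabs (f x - f y) <= H * Rabs (x - y)) ->
  continuous_on_interval f a b.
Proof.
  intros Hlip x Hx eps Heps. exists (eps / (Rabs H + 1)); split.
  { apply Rdiv_lt_0_compat; [lra | pose proof (Rabs_pos H); lra]. }
  intros y Hy Hyx. eapply Rle_lt_trans; [apply Hlip; auto|].
  pose proof (Rabs_pos H). pose proof (Rabs_pos (y - x)). pose proof (Rle_abs H).
  apply Rle_lt_trans with ((Rabs H + 1) * Rabs (y - x)); [nra|].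
  apply Rmult_lt_compat_l with (r := Rabs H + 1) in Hyx; [|lra].
  replace ((Rabs H + 1) * (eps / (Rabs H + 1))) with eps in Hyx by (field; lra). exact Hyx.
Qed.

Lemma continuous_on_box_of_end (u : R -> R -> R) a b c d : continuous_on_end u -> 0 <= a ->
  continuous_on_box u a b c d.
Proof.
  intros Hu Ha s t Hs _ eps Heps. destruct (Hu s t eps ltac:(lra) Heps) as [del [Hdel H]].
  exists del; split; [exact Hdel|]. intros s' t' Hs' _. apply H. lra.
Qed.

Lemma continuous_on_box_of_interval (f : R -> R) a b c d : continuous_on_interval f a b ->
  continuous_on_box (fun s _ => f s) a b c d.
Proof.
  intros Hf s t Hs _ eps Heps. destruct (Hf s Hs eps Heps) as [del [Hdel H]].
  exists del; split; [exact Hdel|]. intros s' t' Hs' _ Hss' _. apply H; auto.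
Qed.

Lemma continuous_on_box_opp W a b c d : continuous_on_box W a b c d ->
  continuous_on_box (fun s t => - W s t) a b c d.
Proof.
  intros HW s t Hs Ht eps Heps. destruct (HW s t Hs Ht eps Heps) as [del [Hdel H]].
  exists del; split; [exact Hdel|]. intros s' t' Hs' Ht' Hss' Htt'.
  replace (- W s' t' - - W s t) with (- (W s' t' - W s t)) by ring.
  rewrite Rabs_Ropp. apply H; auto.
Qed.

Lemma continuous_on_box_plus W1 W2 a b c d : continuous_on_box W1 a b c d ->
  continuous_on_box W2 a b c d -> continuous_on_box (fun s t => W1 s t + W2 s t) a b c d.
Proof.
  intros H1 H2 s t Hs Ht eps Heps.
  destruct (H1 s t Hs Ht (eps / 2)) as [del1 [Hdel1 C1]]; [lra|].
  destruct (H2 s t Hs Ht (eps / 2)) as [del2 [Hdel2 C2]]; [lra|].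
  exists (Rmin del1 del2); split; [apply Rmin_glb_lt; auto|].
  intros s' t' Hs' Ht' Hss' Htt'.
  pose proof (Rmin_l del1 del2). pose proof (Rmin_r del1 del2).
  specialize (C1 s' t' Hs' Ht' ltac:(lra) ltac:(lra)). specialize (C2 s' t' Hs' Ht' ltac:(lra) ltac:(lra)).
  apply Rabs_def2 in C1. apply Rabs_def2 in C2. apply Rabs_def1; lra.
Qed.

Lemma periodic_strip_max W a b p : a <= b -> 0 < p -> continuous_on_box W a b 0 p ->
  (forall s t, a <= s <= b -> W s (t + p) = W s t) ->
  exists s0 t0, a <= s0 <= b /\ forall s t, a <= s <= b -> W s t <= W s0 t0.
Proof.
  intros Hab Hp HW Hper.
  destruct (box_max W a b 0 p Hab ltac:(lra) HW) as [s0 [t0 [Hs0 [_ Hmax]]]].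
  exists s0, t0; split; [exact Hs0|]. intros s t Hs.
  destruct (periodic_representative (W s) p Hp (fun t => Hper s t Hs) t) as [t' [Ht' ->]].
  apply Hmax; auto.
Qed.
Section Comparison.

Variables g1 g2 : R -> R.
Hypothesis Hreg : regular_profile g1 g2.

Local Notation phi := (conformal_coord g1 g2).
Local Notation h := (lap_coef_t g1 g2).
Local Notation k := (lap_coef_s g1 g2).

(* [- eps * phi] is harmonic and makes the comparison function negative far out; the small
   quadratic term makes it strictly subharmonic, which the interior-maximum argument needs. *)
Definition barrier (eps del s : R) : R := (del * phi s - eps) * phi s.

Lemma barrier_derive eps del s : 0 < s -> is_derive (barrier eps del) s (h s * (2 * del * phi s - eps)).
Proof.
  intros Hs. pose proof (conformal_coord_derive g1 g2 Hreg s Hs) as Hphi.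
  assert (Hex : ex_derive phi s) by (exists (h s); exact Hphi).
  unfold barrier. auto_derive; [tauto|].
  rewrite (is_derive_unique (fun x : R => phi x) s (h s) Hphi). ring.
Qed.

Lemma barrier_continuous eps del R0 : 0 <= eps -> 0 <= del -> 0 <= R0 ->
  continuous_on_interval (barrier eps del) 0 R0.
Proof.
  intros Heps Hdel HR.
  destruct (conformal_coord_lipschitz g1 g2 Hreg R0 HR) as [H [HH Hlip]].
  apply continuous_on_interval_of_lipschitz with (H := H * (2 * del * phi R0 + eps)).
  intros x y Hx Hy. unfold barrier.
  pose proof (conformal_coord_nonneg g1 g2 Hreg x (proj1 Hx)).
  pose proof (conformal_coord_nonneg g1 g2 Hreg y (proj1 Hy)).
  pose proof (conformal_coord_le g1 g2 Hreg x R0 Hx). pose proof (conformal_coord_le g1 g2 Hreg y R0 Hy).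
  replace ((del * phi x - eps) * phi x - (del * phi y - eps) * phi y)
    with ((phi x - phi y) * (del * (phi x + phi y) - eps)) by ring.
  rewrite Rabs_mult.
  replace (H * (2 * del * phi R0 + eps) * Rabs (x - y)) with (H * Rabs (x - y) * (2 * del * phi R0 + eps))
    by ring.
  apply Rmult_le_compat; auto using Rabs_pos. apply Rabs_le. split; nra.
Qed.

Section Harmonic.

Variables u v : R -> R -> R.
Hypothesis Hu : harmonic_on_end g1 g2 u.
Hypothesis Hv : harmonic_on_end g1 g2 v.

Let W eps del s t := u s t - v s t + barrier eps del s.

Lemma comparison_no_interior_max eps del s0 t0 r : 0 < del -> 0 < r -> r <= s0 ->
  (forall s, Rabs (s - s0) < r -> W eps del s t0 <= W eps del s0 t0) ->
  (forall t, Rabs (t - t0) < r -> W eps del s0 t <= W eps del s0 t0) -> False.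
Proof.
  destruct Hu as [_ [_ [C2u Lu]]]. destruct Hv as [_ [_ [C2v Lv]]].
  intros Hdel Hr Hrs Hmax_s Hmax_t. assert (Hs0 : 0 < s0) by lra.
  assert (Hnear : forall a, Rabs (a - s0) < r -> 0 < a) by (intros a Ha; apply Rabs_def2 in Ha; lra).
  assert (Ht_test : Derive (dT u s0) t0 - Derive (dT v s0) t0 <= 0).
  { apply (local_max_derive_factor_nonpos (W eps del s0) (fun t => dT u s0 t - dT v s0 t)
      (fun _ => 1) t0 r); auto; [| intros; lra |].
    - intros y _. unfold W. auto_derive.
      + split; [apply (C2u s0 y Hs0)|]. split; [apply (C2v s0 y Hs0)|]. exact I.
      + unfold dT. ring.
    - apply (is_derive_minus (dT u s0) (dT v s0));
        apply Derive_correct; [apply (C2u s0 t0 Hs0) | apply (C2v s0 t0 Hs0)]. }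
  set (Du := Derive (fun a => dS u a t0 * k a) s0).
  set (Dv := Derive (fun a => dS v a t0 * k a) s0).
  assert (Hs_test : Du - Dv + 2 * del * h s0 <= 0).
  { apply (local_max_derive_factor_nonpos (fun a => W eps del a t0)
      (fun a => dS u a t0 * k a - dS v a t0 * k a + (2 * del * phi a - eps)) h s0 r); auto.
    - intros a Ha. specialize (Hnear a Ha).
      assert (Hhk := lap_coef_t_mul_s g1 g2 Hreg a ltac:(lra)).
      unfold W.
      replace (h a * _) with (dS u a t0 - dS v a t0 + h a * (2 * del * phi a - eps))
        by (transitivity ((h a * k a) * (dS u a t0 - dS v a t0) + h a * (2 * del * phi a - eps));
            [rewrite Hhk | ]; ring).
      apply (is_derive_plus (fun x => u x t0 - v x t0) (barrier eps del));
        [apply (is_derive_minus (fun x => u x t0) (fun x => v x t0)) | apply barrier_derive, Hnear];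
        apply Derive_correct; [apply (C2u a t0 Hnear) | apply (C2v a t0 Hnear)].
    - intros a Ha. apply (lap_coef_t_pos g1 g2 Hreg). pose proof (Hnear a Ha). lra.
    - destruct (lap_coef_ex_derive g1 g2 Hreg s0 ltac:(lra)) as [_ Hk].
      replace (Du - Dv + 2 * del * h s0) with (Du - Dv + (2 * del * h s0 - 0)) by ring.
      apply (is_derive_plus (fun a => dS u a t0 * k a - dS v a t0 * k a) (fun a => 2 * del * phi a - eps)).
      + apply (is_derive_minus (fun a => dS u a t0 * k a) (fun a => dS v a t0 * k a));
          apply Derive_correct, ex_derive_mult; auto; [apply (C2u s0 t0 Hs0) | apply (C2v s0 t0 Hs0)].
      + apply (is_derive_minus (fun a => 2 * del * phi a) (fun _ => eps)); [|exact (is_derive_const eps s0)].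
        apply is_derive_scal, conformal_coord_derive; auto. }
  pose proof (harmonic_rev g1 g2 Hreg u s0 t0 Hs0 (Lu s0 t0 Hs0)) as Hlu.
  pose proof (harmonic_rev g1 g2 Hreg v s0 t0 Hs0 (Lv s0 t0 Hs0)) as Hlv.
  fold Du in Hlu. fold Dv in Hlv.
  pose proof (lap_coef_t_pos g1 g2 Hreg s0 ltac:(lra)). nra.
Qed.

Hypothesis Hunbounded : forall M, exists T, 0 <= T /\ M < phi T.

Lemma comparison_principle : bounded_on_end u -> bounded_on_end v ->
  (forall t, u 0 t <= v 0 t) -> forall s t, 0 <= s -> u s t <= v s t.
Proof.
  intros [Bu HBu] [Bv HBv] H0 s1 t1 Hs1. apply Rnot_lt_le. intros Hlt.
  assert (HB : forall s t, 0 <= s -> u s t - v s t <= Bu + Bv).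
  { intros s t Hs. pose proof (HBu s t Hs). pose proof (HBv s t Hs). split_Rabs; lra. }
  pose proof (HB s1 t1 Hs1) as Heta. pose proof (conformal_coord_nonneg g1 g2 Hreg s1 Hs1) as Hphi1.
  set (eps := (u s1 t1 - v s1 t1) / (phi s1 + 1)).
  assert (Heps : 0 < eps) by (apply Rdiv_lt_0_compat; lra).
  destruct (Hunbounded (2 * (Bu + Bv) / eps)) as [T [HT HphiT]].
  set (R0 := Rmax T s1).
  assert (HR0 : T <= R0 /\ s1 <= R0) by (split; [apply Rmax_l | apply Rmax_r]).
  assert (HpR : 2 * (Bu + Bv) < eps * phi R0).
  { pose proof (conformal_coord_le g1 g2 Hreg T R0 ltac:(lra)).
    apply (Rmult_lt_compat_l eps) in HphiT; [|exact Heps].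
    replace (eps * (2 * (Bu + Bv) / eps)) with (2 * (Bu + Bv)) in HphiT by (field; lra). nra. }
  set (del := eps / (2 * phi R0)).
  assert (Hdel : 0 < del) by (apply Rdiv_lt_0_compat; nra).
  assert (Hbar : barrier eps del R0 = - (eps * phi R0) / 2) by (unfold barrier, del; field; nra).
  assert (Hcont : continuous_on_box (W eps del) 0 R0 0 (2 * PI)).
  { apply continuous_on_box_plus; [apply continuous_on_box_plus; [|apply continuous_on_box_opp]|].
    - apply continuous_on_box_of_end; [apply Hu | lra].
    - apply continuous_on_box_of_end; [apply Hv | lra].
    - apply continuous_on_box_of_interval, barrier_continuous; lra. }
  assert (Hper : forall s t, 0 <= s <= R0 -> W eps del s (t + 2 * PI) = W eps del s t).
  { intros s t Hs. unfold W. rewrite (proj1 Hu s t), (proj1 Hv s t); lra. }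
  destruct (periodic_strip_max (W eps del) 0 R0 (2 * PI) ltac:(lra) ltac:(pose proof PI_RGT_0; lra)
    Hcont Hper) as [s0 [t0 [Hs0 Hmax]]].
  assert (Hpos : 0 < W eps del s0 t0).
  { apply Rlt_le_trans with (W eps del s1 t1); [|apply Hmax; lra].
    unfold W, barrier. fold eps.
    replace (u s1 t1 - v s1 t1) with (eps * (phi s1 + 1)) by (unfold eps; field; lra). nra. }
  assert (Hs0_lo : 0 < s0).
  { destruct (proj1 Hs0) as [| Hz]; [assumption|]. exfalso. subst s0. specialize (H0 t0).
    unfold W, barrier in Hpos. rewrite conformal_coord_0 in Hpos. lra. }
  assert (Hs0_hi : s0 < R0).
  { destruct (proj2 Hs0) as [| Hz]; [assumption|]. exfalso. subst s0. pose proof (HB R0 t0 ltac:(lra)).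
    unfold W in Hpos. lra. }
  apply (comparison_no_interior_max eps del s0 t0 (Rmin s0 (R0 - s0)) Hdel);
    [apply Rmin_glb_lt; lra | apply Rmin_l | |].
  - intros s Hs. apply Rabs_def2 in Hs. pose proof (Rmin_l s0 (R0 - s0)).
    pose proof (Rmin_r s0 (R0 - s0)). apply Hmax. lra.
  - intros t _. apply Hmax. lra.
Qed.

End Harmonic.
End Comparison.
Lemma parabolic_of_conformal_coord_unbounded g1 g2 : regular_profile g1 g2 ->
  (forall M, exists T, 0 <= T /\ M < conformal_coord g1 g2 T) -> parabolic_end g1 g2.
Proof.
  intros Hreg Hunb u v Hu Bu Hv Bv H0 s t Hs. apply Rle_antisym.
  - apply (comparison_principle g1 g2 Hreg u v Hu Hv Hunb Bu Bv); auto.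
    intros t'. rewrite H0. apply Rle_refl.
  - apply (comparison_principle g1 g2 Hreg v u Hv Hu Hunb Bv Bu); auto.
    intros t'. rewrite H0. apply Rle_refl.
Qed.

Lemma cone_profile g1 g2 c s : 0 < g1 s ->
  c * sqrt ((X1 g1 s 0)^2 + (X2 g1 s 0)^2) <= X3 g2 s 0 -> c * g1 s <= g2 s.
Proof.
  intros Hg H. unfold X1, X2, X3 in H. rewrite cos_0, sin_0 in H.
  replace ((g1 s * 1) ^ 2 + (g1 s * 0) ^ 2) with (g1 s ^ 2) in H by ring.
  rewrite sqrt_pow2 in H; lra.
Qed.

Theorem theoremB (g1 g2 : R -> R) (c : R) :
  complete_end_curve g1 g2 ->
  0 < c ->
  (forall s t, 0 <= s ->
     c * sqrt ((X1 g1 s t)^2 + (X2 g1 s t)^2) <= X3 g2 s t) ->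
  parabolic_end g1 g2.
Proof.
  intros Hend Hc Hcone.
  pose proof (regular_profile_of_complete g1 g2 Hend) as Hreg.
  apply parabolic_of_conformal_coord_unbounded; [exact Hreg|].
  apply (conformal_coord_unbounded g1 g2 Hreg c Hc).
  - intros s Hs. apply cone_profile; [apply (profile_pos1 _ _ Hreg s Hs) | apply Hcone, Hs].
  - apply Hend.
Qed.
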